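(* Let $U$ be the set of positive integers $N$ for which there are no antipalindromic numbers $A,B$ with $N=A/B$. Then the lower density of $U$ satisfies $\liminf_{n\to\infty}\frac1n\,|U\cap\{1,\dots,n\}|\ge \frac1{60}$.
   Context: A positive integer $n$ is antipalindromic if its binary representation $w=w_1\cdots w_L$ (most significant digit first, no leading zeros) has even length $L$ and satisfies $w_i+w_{L+1-i}=1$ for all $i$. *)

From Stdlib Require Import Reals List Arith Lia ClassicalDescription.
From Coquelicot Require Import Coquelicot.
Open Scope R_scope.

Fixpoint bits_aux (fuel n : nat) : list bool :=
  match fuel with
  | O => nil
  | S f => match n with
           | O => nil
           | _ => Nat.odd n :: bits_aux f (Nat.div2 n)
           end
  end.

Definition binrep (n : nat) : list bool := rev (bits_aux n n).

Definition antipal_word (w : list bool) : Prop :=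
  Nat.Even (length w) /\
  forall i, (i < length w)%nat ->
    nth i w false <> nth (length w - 1 - i) w false.

Definition antipalindromic (n : nat) : Prop :=
  (0 < n)%nat /\ antipal_word (binrep n).

Definition inU (N : nat) : Prop :=
  (0 < N)%nat /\
  ~ exists A B, antipalindromic A /\ antipalindromic B /\ A = (N * B)%nat.

Definition indicator (P : Prop) : R :=
  if excluded_middle_informative P then 1 else 0.

Fixpoint countU (n : nat) : R :=
  match n with
  | O => 0
  | S m => countU m + indicator (inU (S m))
  end.

(* An antipalindromic A of binary length 2k+2 is even, lies in [2*4^k, 4*4^k), and
   its leading base-4 digit A/4^k (which is 2 or 3) has parity opposite to the bit of
   weight 2.  If A = N*B with N odd and A, B antipalindromic, then B is even, so A and B
   share that bit, hence share their leading digit q; therefore N = A/B lies strictly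
   between (q/(q+1))*4^e and ((q+1)/q)*4^e, within (2/3*4^e, 3/2*4^e), for e = a - b.
   No odd N in (6*4^d, 32/3*4^d) is of this form, and the 2*4^d odd numbers in
   (6*4^d, 10*4^d) give U density at least 1/20 on every window [10*4^d, 40*4^d). *)

From Stdlib Require Import Reals.
From Coquelicot Require Import Coquelicot.
From Stdlib Require Import Arith List Lia Lra ClassicalDescription.
Local Open Scope nat_scope.

Lemma bits_aux_nth f n i : n <= f -> nth i (bits_aux f n) false = Nat.odd (n / 2 ^ i).
Proof.
  revert n i; induction f as [|f IH]; intros n i Hn.
  - replace n with 0 by lia; rewrite Nat.Div0.div_0_l; now destruct i.
  - destruct n as [|n]; [rewrite Nat.Div0.div_0_l; now destruct i|].
    destruct i as [|i]; cbn [bits_aux nth].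
    + now rewrite Nat.div_1_r.
    + rewrite IH, Nat.div2_div, Nat.Div0.div_div by (apply Nat.div2_decr; lia).
      now rewrite Nat.pow_succ_r'.
Qed.

Lemma log2_div2 n : 0 < Nat.div2 n -> Nat.log2 n = S (Nat.log2 (Nat.div2 n)).
Proof.
  intro Hpos; rewrite (Nat.div2_odd n) at 1.
  destruct (Nat.odd n); cbn [Nat.b2n].
  - now apply Nat.log2_succ_double.
  - now rewrite Nat.add_0_r; apply Nat.log2_double.
Qed.

Lemma bits_aux_length f n : 0 < n <= f -> length (bits_aux f n) = S (Nat.log2 n).
Proof.
  revert n; induction f as [|f IH]; intros n Hn; [lia|].
  destruct n as [|n]; [lia|]; cbn [bits_aux length].
  destruct (Nat.div2 (S n)) as [|h] eqn:Hh.
  - assert (n = 0) as ->.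
    { pose proof (Nat.div2_odd (S n)) as Hsplit; rewrite Hh in Hsplit.
      destruct (Nat.odd (S n)); cbn in Hsplit; lia. }
    now destruct f.
  - rewrite IH, (log2_div2 (S n)), Hh; [reflexivity | lia |].
    rewrite <- Hh; split; [lia | apply Nat.div2_decr; lia].
Qed.

Lemma binrep_length n : 0 < n -> length (binrep n) = S (Nat.log2 n).
Proof. intro Hn; unfold binrep; rewrite length_rev; apply bits_aux_length; lia. Qed.

Lemma binrep_nth n i : 0 < n -> i <= Nat.log2 n ->
  nth i (binrep n) false = Nat.odd (n / 2 ^ (Nat.log2 n - i)).
Proof.
  intros Hn Hi; unfold binrep.
  pose proof (bits_aux_length n n) as Hlen.
  rewrite rev_nth, bits_aux_nth, Hlen by lia.
  do 3 f_equal; lia.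
Qed.

Lemma antipalindromic_shape A : antipalindromic A ->
  Nat.odd A = false /\
  exists k, 2 * 4 ^ k <= A < 4 * 4 ^ k /\ Nat.odd (A / 4 ^ k) <> Nat.odd (A / 2).
Proof.
  intros [HA [[m Hm] Hanti]].
  rewrite binrep_length in Hm, Hanti by exact HA.
  set (k := m - 1).
  assert (Hlog : Nat.log2 A = S (2 * k)) by lia.
  assert (Hpow : 2 ^ (2 * k) = 4 ^ k) by now rewrite Nat.pow_mul_r.
  pose proof (Nat.log2_spec A HA) as Hbounds.
  rewrite Hlog, !Nat.pow_succ_r', Hpow in Hbounds.
  assert (Hdigit : forall i, i <= 1 ->
    Nat.odd (A / 2 ^ (S (2 * k) - i)) <> Nat.odd (A / 2 ^ i)).
  { intros i Hi.
    pose proof (Hanti i ltac:(lia)) as Hneq.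
    rewrite !binrep_nth, Hlog in Hneq by lia.
    now replace (S (2 * k) - (S (S (2 * k)) - 1 - i)) with i in Hneq by lia. }
  split.
  - pose proof (Hdigit 0 (Nat.le_0_l 1)) as H0.
    rewrite Nat.sub_0_r, Nat.pow_succ_r', Hpow, Nat.div_1_r in H0.
    replace (A / (2 * 4 ^ k)) with 1 in H0
      by (apply (Nat.div_unique _ _ _ (A - 2 * 4 ^ k)); lia).
    now destruct (Nat.odd A).
  - exists k; split; [lia|].
    pose proof (Hdigit 1 (le_n 1)) as H1.
    now rewrite Nat.sub_1_r, Nat.pred_succ, Hpow, Nat.pow_1_r in H1.
Qed.

Lemma div_pow4_between A k : 2 * 4 ^ k <= A < 4 * 4 ^ k -> A / 4 ^ k = 2 \/ A / 4 ^ k = 3.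
Proof.
  intro HA.
  assert (H4 : 4 ^ k <> 0) by (apply Nat.pow_nonzero; lia).
  pose proof (Nat.Div0.mul_div_le A (4 ^ k)).
  pose proof (Nat.mul_succ_div_gt A (4 ^ k) H4).
  nia.
Qed.

Lemma antipalindromic_odd_ratio N A B :
  Nat.odd N = true -> antipalindromic A -> antipalindromic B -> A = N * B ->
  exists a b, 2 * N * 4 ^ b < 3 * 4 ^ a /\ 2 * 4 ^ a < 3 * N * 4 ^ b.
Proof.
  intros HN HA HB ->.
  destruct (antipalindromic_shape _ HA) as [_ [a [Ha Hda]]].
  destruct (antipalindromic_shape _ HB) as [Hev [b [Hb Hdb]]].
  assert (Nat.Even B) as [c ->]
    by (apply Nat.even_spec; now rewrite <- Nat.negb_odd, Hev).
  rewrite (Nat.mul_comm 2 c), Nat.mul_assoc in *.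
  rewrite Nat.div_mul, Nat.odd_mul, HN in Hda by lia.
  rewrite Nat.div_mul in Hdb by lia.
  assert (Hq : N * c * 2 / 4 ^ a = c * 2 / 4 ^ b).
  { destruct (div_pow4_between _ _ Ha) as [Ea | Ea], (div_pow4_between _ _ Hb) as [Eb | Eb];
      rewrite Ea, Eb in *; cbn in *; try reflexivity; destruct (Nat.odd c); congruence. }
  exists a, b.
  assert (H4a : 4 ^ a <> 0) by (apply Nat.pow_nonzero; lia).
  assert (H4b : 4 ^ b <> 0) by (apply Nat.pow_nonzero; lia).
  pose proof (Nat.Div0.mul_div_le (N * c * 2) (4 ^ a)).
  pose proof (Nat.mul_succ_div_gt (N * c * 2) (4 ^ a) H4a).
  pose proof (Nat.Div0.mul_div_le (c * 2) (4 ^ b)).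
  pose proof (Nat.mul_succ_div_gt (c * 2) (4 ^ b) H4b).
  destruct (div_pow4_between _ _ Hb) as [Eb | Eb]; rewrite Hq, Eb in *; split; nia.
Qed.

Lemma inU_odd_gap d N : Nat.odd N = true -> 6 * 4 ^ d < N -> 3 * N < 32 * 4 ^ d -> inU N.
Proof.
  intros HN Hlo Hhi; split; [lia|].
  intros (A & B & HA & HB & E).
  destruct (antipalindromic_odd_ratio N A B HN HA HB E) as (a & b & Hab & Hba).
  assert (H4b : 0 < 4 ^ b) by (apply Nat.neq_0_lt_0, Nat.pow_nonzero; lia).
  destruct (Nat.le_gt_cases a (b + S d)) as [Hsmall | Hlarge].
  - assert (4 ^ a <= 4 * 4 ^ d * 4 ^ b).
    { rewrite <- Nat.pow_succ_r', <- Nat.pow_add_r.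
      apply Nat.pow_le_mono_r; lia. }
    nia.
  - assert (16 * 4 ^ d * 4 ^ b <= 4 ^ a).
    { change 16 with (4 ^ 2); rewrite <- !Nat.pow_add_r.
      apply Nat.pow_le_mono_r; lia. }
    nia.
Qed.

Lemma pow4_bracket c n : 0 < c <= n -> exists d, c * 4 ^ d <= n < 4 * c * 4 ^ d.
Proof.
  induction n as [n IH] using lt_wf_ind; intro Hn.
  destruct (Nat.lt_ge_cases n (4 * c)) as [Hsmall | Hlarge].
  - exists 0; cbn; lia.
  - destruct (IH (n / 4)) as [d Hd].
    + apply Nat.div_lt; lia.
    + split; [lia | apply Nat.div_le_lower_bound; lia].
    + exists (S d); rewrite Nat.pow_succ_r'.
      pose proof (Nat.div_mod n 4); pose proof (Nat.mod_upper_bound n 4); lia.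
Qed.

Local Open Scope R_scope.

Lemma indicator_nonneg P : 0 <= indicator P.
Proof. unfold indicator; destruct (excluded_middle_informative P); lra. Qed.

Lemma indicator_true P : P -> indicator P = 1.
Proof. intro H; unfold indicator; destruct (excluded_middle_informative P); tauto. Qed.

Lemma countU_le_add m k : countU m <= countU (m + k).
Proof.
  induction k as [|k IH].
  - rewrite Nat.add_0_r; lra.
  - rewrite Nat.add_succ_r; cbn [countU].
    pose proof (indicator_nonneg (inU (S (m + k)))); lra.
Qed.

Lemma countU_nonneg n : 0 <= countU n.
Proof. exact (countU_le_add 0 n). Qed.

Lemma countU_odd_run a c : (forall j, (j < c)%nat -> inU (a + 1 + 2 * j)) ->
  countU a + INR c <= countU (a + 2 * c).
Proof.
  induction c as [|c IH]; intro Hrun.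
  - rewrite Nat.add_0_r; cbn; lra.
  - replace (a + 2 * S c)%nat with (S (S (a + 2 * c))) by lia.
    cbn [countU]; rewrite S_INR.
    rewrite (indicator_true (inU (S (a + 2 * c)))).
    + pose proof (IH (fun j Hj => Hrun j (Nat.lt_lt_succ_r _ _ Hj))).
      pose proof (indicator_nonneg (inU (S (S (a + 2 * c))))); lra.
    + replace (S (a + 2 * c)) with (a + 1 + 2 * c)%nat by lia; apply Hrun; lia.
Qed.

Lemma countU_lower_bound n : (10 <= n)%nat -> INR n <= 20 * countU n.
Proof.
  intro Hn.
  destruct (pow4_bracket 10 n ltac:(lia)) as [d Hd].
  set (m := (4 ^ d)%nat) in Hd.
  assert (Hrun : countU (6 * m) + INR (2 * m) <= countU (6 * m + 2 * (2 * m))).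
  { apply countU_odd_run; intros j Hj; apply (inU_odd_gap d).
    - replace (6 * m + 1 + 2 * j)%nat with (2 * (3 * m + j) + 1)%nat by lia.
      apply Nat.odd_odd.
    - unfold m in *; lia.
    - unfold m in *; lia. }
  pose proof (countU_le_add (6 * m + 2 * (2 * m)) (n - (6 * m + 2 * (2 * m)))).
  replace (6 * m + 2 * (2 * m) + (n - (6 * m + 2 * (2 * m))))%nat with n in * by lia.
  pose proof (countU_nonneg (6 * m)).
  assert (INR n <= 40 * INR m).
  { replace 40 with (INR 40) by (cbn; lra); rewrite <- mult_INR; apply le_INR; lia. }
  rewrite mult_INR in Hrun; cbn [INR] in Hrun; lra.
Qed.

Theorem corollary19 :
  Rbar_le (Finite (1 / 60)) (LimInf_seq (fun n => countU n / INR n)).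
Proof.
  rewrite <- (LimInf_seq_const (1 / 60)).
  apply LimInf_le; exists 10%nat; intros n Hn.
  pose proof (countU_lower_bound n Hn).
  assert (0 < INR n) by (apply lt_0_INR; lia).
  apply Rmult_le_reg_r with (INR n); [assumption|].
  replace (countU n / INR n * INR n) with (countU n) by (field; lra).
  lra.
Qed.
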